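(* Let $p$ be an odd prime, let $G$ be a quasi-powerful $p$-group and let $H=G^{p}Z(G)$. Then $H$ is powerfully embedded in $G$, i.e. $[H,G]\le H^{p}$.
   Context: For an odd prime $p$, a finite $p$-group $G$ is powerful if $[G,G]\le G^{p}$ (where $G^{p}=\langle g^p\mid g\in G\rangle$), and $G$ is quasi-powerful if $G/Z(G)$ is powerful. A subgroup $N$ of $G$ is powerfully embedded in $G$ if $[N,G]\le N^{p}$. *)

From mathcomp Require Import all_boot all_fingroup all_solvable.
Set Implicit Arguments. Unset Strict Implicit. Unset Printing Implicit Defensive.
Local Open Scope group_scope.

Definition pow_subgroup (gT : finGroupType) (p : nat) (G : {set gT}) : {set gT} :=
  <<[set x ^+ p | x in G]>>.

Definition powerful (gT : finGroupType) (p : nat) (G : {set gT}) : bool :=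
  [~: G, G] \subset pow_subgroup p G.

Definition quasi_powerful (gT : finGroupType) (p : nat) (G : {group gT}) : bool :=
  powerful p (G / 'Z(G)).

Definition powerfully_embedded (gT : finGroupType) (p : nat) (N G : {set gT}) : bool :=
  [~: N, G] \subset pow_subgroup p N.

(* Put H = G^p Z(G), M = [H, G] and N = H^p.  Since G/Z(G) is powerful,
   [G, G] <= H.  Modulo W = [M, G] N, every commutator c = [x, y] and
   d = [c, x] has trivial p-th power and d is central, so
   (x^p)^y = (x c)^p = x^p c^p d^(p(p-1)/2) = x^p because p is odd; hence
   G^p, and with it H, is central modulo W, i.e. M <= [M, G] N.  In the
   nilpotent group G/N this forces M/N = 1. *)

From mathcomp Require Import all_boot all_fingroup all_solvable.
Set Implicit Arguments. Unset Strict Implicit. Unset Printing Implicit Defensive.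
Local Open Scope group_scope.

Section PowSubgroup.

Variables (gT : finGroupType) (p : nat).
Implicit Types (A : {set gT}) (G : {group gT}).

Canonical pow_subgroup_group A := Eval hnf in [group of pow_subgroup p A].

Lemma mem_pow_subgroup A x : x \in A -> x ^+ p \in pow_subgroup p A.
Proof. by move=> Ax; apply/mem_gen/imset_f. Qed.

Lemma pow_subgroup_sub G : pow_subgroup p G \subset G.
Proof.
by rewrite gen_subG; apply/subsetP => _ /imsetP[x Gx ->]; rewrite groupX.
Qed.

Lemma norms_pow_subgroup G A : G \subset 'N(A) -> G \subset 'N(pow_subgroup p A).
Proof.
move=> nAG; rewrite norms_gen //; apply/subsetP => g Gg; rewrite inE.
apply/subsetP => _ /imsetP[_ /imsetP[a Aa ->] ->].
by rewrite conjXg; apply: imset_f; rewrite memJ_norm // (subsetP nAG).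
Qed.

Lemma morphim_pow_subgroup (rT : finGroupType) (D G : {group gT})
    (f : {morphism D >-> rT}) :
  G \subset D -> f @* pow_subgroup p G = pow_subgroup p (f @* G).
Proof.
move=> sGD; have sGpD := subset_trans (subset_gen _) (pow_subgroup_sub G).
rewrite morphim_gen ?(subset_trans sGpD) //; congr <<_>>.
rewrite morphimEsub ?(subset_trans sGpD) // (morphimEsub _ sGD) -!imset_comp.
by apply: eq_in_imset => x Gx /=; rewrite morphX ?(subsetP sGD).
Qed.

Lemma quotient_pow_subgroup G (K : {group gT}) :
  G \subset 'N(K) -> pow_subgroup p G / K = pow_subgroup p (G / K).
Proof. exact: morphim_pow_subgroup. Qed.

End PowSubgroup.

Lemma der1_sub_pow_subgroupM (gT : finGroupType) (p : nat) (G K : {group gT}) :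
  K <| G -> powerful p (G / K) -> [~: G, G] \subset pow_subgroup p G * K.
Proof.
case/andP=> _ nKG; rewrite /powerful -quotientR // -quotient_pow_subgroup //.
rewrite (quotientSK _ (subset_trans (der1_subG G) nKG)).
by rewrite (normC (subset_trans (pow_subgroup_sub p G) nKG)).
Qed.

Lemma commM_center (gT : finGroupType) (A G : {group gT}) :
  A \subset G -> [~: A * 'Z(G), G] = [~: A, G].
Proof.
move=> sAG; have sRG := subset_trans (commSg G sAG) (der1_subG G).
rewrite commMG ?(commG1P (subsetIr G 'C(G))) ?mulg1 //.
by rewrite cents_norm // (subset_trans (subsetIr G 'C(G))) ?centS.
Qed.

Lemma commute_expg_odd (gT : finGroupType) (p : nat) (x y : gT) :
    odd p -> commute x [~ [~ x, y], x] -> commute [~ x, y] [~ [~ x, y], x] ->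
    [~ x, y] ^+ p = 1 -> [~ [~ x, y], x] ^+ p = 1 ->
  commute (x ^+ p) y.
Proof.
move=> odd_p cxd ccd cp1 dp1; apply/commgP/conjg_fixP.
rewrite conjXg conjg_mulR expMg_Rmul // bin2odd // expgM dp1 expg1n cp1.
by rewrite !mulg1.
Qed.

Lemma commg_pow_subgroup_sub (gT : finGroupType) (p : nat) (H : {set gT})
    (G W : {group gT}) :
    odd p -> G \subset 'N(W) -> H \subset G -> [~: G, G] \subset H ->
    pow_subgroup p H \subset W -> [~: H, G, G] \subset W ->
  [~: pow_subgroup p G, G] \subset W.
Proof.
move=> odd_p nWG sHG sG'H sHpW sHGGW.
have cHGW := quotient_cents2r sHGGW.
have sHGH : [~: H, G] \subset H := subset_trans (commSg G sHG) sG'H.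
have nWH := subset_trans sHG nWG.
have coset_expp1 h : h \in H -> coset W h ^+ p = 1.
  move=> Hh; rewrite -morphX ?(subsetP nWH) //; apply: coset_id.
  exact: subsetP sHpW _ (mem_pow_subgroup p Hh).
rewrite -quotient_cents2 ?(subset_trans (pow_subgroup_sub p G)) //.
rewrite quotient_pow_subgroup // gen_subG.
apply/subsetP => _ /imsetP[_ /morphimP[x Nx Gx ->] ->].
apply/centP => _ /morphimP[y Ny Gy ->].
have Hc : [~ x, y] \in H by rewrite (subsetP sG'H) ?mem_commg.
have HGd : [~ [~ x, y], x] \in [~: H, G] by rewrite mem_commg.
have c_eq : [~ coset W x, coset W y] = coset W [~ x, y] by rewrite morphR.
have d_eq : [~ [~ coset W x, coset W y], coset W x] = coset W [~ [~ x, y], x].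
  by rewrite c_eq -morphR ?groupR.
have /centP cd : [~ [~ coset W x, coset W y], coset W x] \in 'C(G / W).
  by rewrite d_eq (subsetP cHGW) ?mem_quotient.
apply: commute_expg_odd => //.
- by apply/commute_sym/cd; rewrite mem_quotient.
- by apply/commute_sym/cd; rewrite c_eq mem_quotient ?(subsetP sHG).
- by rewrite c_eq coset_expp1.
- by rewrite d_eq coset_expp1 ?(subsetP sHGH).
Qed.

Lemma nil_sub_commgY (gT : finGroupType) (G M N : {group gT}) :
    nilpotent G -> M \subset G -> G \subset 'N(N) ->
    M \subset [~: M, G] <*> N ->
  M \subset N.
Proof.
move=> nilG sMG nNG sM_MGN; have nNM := subset_trans sMG nNG.
have sMGG := subset_trans (commSg G sMG) (der1_subG G).
rewrite -quotient_sub1 // subG1.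
have /forall_inP -> // := quotient_nil N nilG.
rewrite subsetI quotientS //= -quotientR //.
by rewrite -(quotientYidr (subset_trans sMGG nNG)) quotientS.
Qed.

Theorem proposition3p6 (gT : finGroupType) (p : nat) (G : {group gT}) :
  prime p -> odd p -> p.-group G -> quasi_powerful p G ->
  powerfully_embedded p (pow_subgroup p G * 'Z(G)) G.
Proof.
move=> _ odd_p pG qpG.
have sGpG := pow_subgroup_sub p G.
have nGpG := norms_pow_subgroup p (normG G).
set H := pow_subgroup p G * 'Z(G).
have sHG : H \subset G := mul_subG sGpG (center_sub G).
have nHG : G \subset 'N(H) := normsM nGpG (normal_norm (center_normal G)).
have sG'H : [~: G, G] \subset H := der1_sub_pow_subgroupM (center_normal G) qpG.
rewrite /powerfully_embedded {1}/H commM_center //.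
apply: nil_sub_commgY (pgroup_nil pG) _ (norms_pow_subgroup p nHG) _.
  exact: subset_trans (commSg G sGpG) (der1_subG G).
apply: commg_pow_subgroup_sub odd_p _ sHG sG'H _ _.
- have nGpGG := normsR (normsR nGpG (normG G)) (normG G).
  exact: normsY nGpGG (norms_pow_subgroup p nHG).
- exact: joing_subr.
- by rewrite commM_center // joing_subl.
Qed.
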